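(* For $\theta>0$ and $1\le q<\infty$, the small Lebesgue sequence space $l^{q)',\theta}$ is a Banach space.
   Context: Let $X$ be one of $\mathbb N,\mathbb N_0,\mathbb Z$. For $\theta>0$ and $1\le q<\infty$, the small Lebesgue sequence space $l^{q)',\theta}$ is the space of all sequences $y=\{y_k\}_{k\in X}$ such that $$\|y\|_{l^{q)',\theta}}:=\inf\Big\{\sum_{j\in X}\inf_{\varepsilon>0}\varepsilon^{\frac{-\theta}{q(1+\varepsilon)}}\Big(\sum_{k\in X}y_{k,j}^{(q(1+\varepsilon))'}\Big)^{\frac{1}{(q(1+\varepsilon))'}}\Big\}<\infty,$$ where the outer infimum is over all decompositions $|y_k|=\sum_{j\in X}y_{k,j}$ ($k\in X$) with all $y_{k,j}\ge0$, and $(q(1+\varepsilon))'$ is the conjugate exponent of $q(1+\varepsilon)$. *)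

From HB Require Import structures.
From mathcomp Require Import all_boot all_order all_algebra.
From mathcomp Require Import all_classical all_reals.
From mathcomp Require Import ereal topology normedtype sequences esum exp.

Set Implicit Arguments.
Unset Strict Implicit.
Unset Printing Implicit Defensive.
Import Order.TTheory GRing.Theory Num.Theory.
Local Open Scope classical_set_scope.
Local Open Scope ring_scope.

Definition conj_exp {R : realType} (p : R) : R := p / (p - 1).

(* For a fixed column j of a decomposition D (D k j = y_{k,j}):
   inf_{eps>0} eps^{-theta/(q(1+eps))} (sum_k y_{k,j}^{(q(1+eps))'})^{1/(q(1+eps))'} *)
Definition small_leb_column {R : realType} {I : choiceType}
  (theta q : R) (D : I -> I -> R) (j : I) : \bar R :=
  ereal_inf [set
    ((eps `^ (- theta / (q * (1 + eps))))%:E *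
      poweR (\esum_(k in [set: I]) ((D k j) `^ (conj_exp (q * (1 + eps))))%:E)
            (conj_exp (q * (1 + eps)))^-1)%E
    | eps in [set e : R | 0 < e]].

Definition small_leb_decomp {R : realType} {I : choiceType}
  (y : I -> R) (D : I -> I -> R) : Prop :=
  (forall k j, 0 <= D k j) /\
  (forall k, (`|y k|)%:E = \esum_(j in [set: I]) (D k j)%:E).

Definition small_leb_norm {R : realType} {I : choiceType}
  (theta q : R) (y : I -> R) : \bar R :=
  ereal_inf [set \esum_(j in [set: I]) small_leb_column theta q D j
            | D in [set D | small_leb_decomp y D]].

(* "the space {y | N y < +oo} equipped with N is a (real) Banach space":
   a linear subspace of the sequences, on which N is a norm, and complete. *)
Definition banach_seq_space {R : realType} {I : choiceType}
  (N : (I -> R) -> \bar R) : Prop :=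
  let V := [set y : I -> R | (N y < +oo)%E] in
  V (fun _ => 0) /\
  (forall y z, V y -> V z -> V (fun k => y k + z k)) /\
  (forall (c : R) y, V y -> V (fun k => c * y k)) /\
  (forall y, V y -> (0 <= N y)%E) /\
  (forall y, V y -> (N y = 0%E <-> y = (fun _ => 0))) /\
  (forall (c : R) y, V y -> N (fun k => c * y k) = (`|c|%:E * N y)%E) /\
  (forall y z, V y -> V z -> (N (fun k => (y k + z k)%R) <= N y + N z)%E) /\
  (forall u : nat -> I -> R, (forall n, V (u n)) ->
     (forall e : R, 0 < e -> exists n0 : nat, forall m n : nat,
        (n0 <= m)%N -> (n0 <= n)%N -> (N (fun k => (u m k - u n k)%R) < e%:E)%E) ->
     exists y, V y /\
       (forall e : R, 0 < e -> exists n0 : nat, forall n : nat,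
        (n0 <= n)%N -> (N (fun k => (u n k - y k)%R) < e%:E)%E)).

From HB Require Import structures.
From mathcomp Require Import all_boot all_order all_algebra.
From mathcomp Require Import all_classical all_reals.
From mathcomp Require Import ereal topology normedtype sequences esum exp.
From mathcomp Require Import lra zify.
Import Order.TTheory GRing.Theory Num.Theory.
Import numFieldNormedType.Exports.
Local Open Scope ring_scope.
Local Open Scope classical_set_scope.

(* Every coordinate is controlled by the norm, e^{-θ/q} |y_k| <= ‖y‖, because
   ε^{-θ/(q(1+ε))} >= e^{-θ/q} and an l^p norm dominates each coordinate.  The heart
   of the proof is countable subadditivity: if |y_k| <= Σ_i |w_{i,k}| for all k, then
   ‖y‖ <= Σ_i ‖w_i‖.  Indeed, near-optimal decompositions of the w_i, laid side by
   side along an injection ℕ × X -> X and rescaled row by row by factors in [0,1],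
   form an admissible decomposition of y, and shrinking the entries only decreases
   each column term.  This gives the triangle inequality, and completeness follows as
   for L^1: a Cauchy sequence converges coordinatewise, and along a rapidly Cauchy
   subsequence the telescoping series bounds the distance to the limit. *)

Lemma esumZl (R : realType) (T : choiceType) (S : set T) (a : T -> \bar R) (c : R) :
  0 <= c -> (forall i, 0 <= a i)%E ->
  (\esum_(i in S) (c%:E * a i) = c%:E * \esum_(i in S) a i)%E.
Proof.
move=> c0 a0; have [->|cn0] := eqVneq c 0.
  by rewrite mul0e esum1// => i _; rewrite mul0e.
have cp : 0 < c by rewrite lt0r cn0.
rewrite /esum -ereal_sup_pZl// image_comp /=; congr ereal_sup.
by apply: eq_imagel => A _ /=; rewrite ge0_mule_fsumr.
Qed.

Lemma esum_pair (R : realType) (T1 T2 : choiceType) (g : T1 * T2 -> \bar R) :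
  (forall p, 0 <= g p)%E ->
  \esum_(p in [set: T1 * T2]) g p =
  \esum_(i in [set: T1]) \esum_(j in [set: T2]) g (i, j).
Proof.
move=> g0; rewrite (esum_esum (J := fun _ => [set: T2]) (a := fun i j => g (i, j))).
  have -> : [set: T1] `*`` (fun=> [set: T2]) = setT by apply/seteqP; split => -[].
  by apply: eq_esum => -[].
by move=> *; exact: g0.
Qed.

Lemma esum_oapp_pcancel {R : realType} {T T' : choiceType} {phi : T -> T'}
    {psi : T' -> option T} (g : T -> \bar R) :
  pcancel phi psi -> ocancel psi phi -> (forall t, 0 <= g t)%E ->
  \esum_(j in [set: T']) oapp g 0%E (psi j) = \esum_(t in [set: T]) g t.
Proof.
move=> phiK psiK g0.
have phi_inj : set_inj [set: T] phi by move=> a b _ _; exact: (pcan_inj phiK).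
rewrite -(eq_esum (a := oapp g 0%E \o psi \o phi)); last by move=> t _ /=; rewrite phiK.
rewrite -(esum_image _ _ (oapp g 0%E \o psi) phi_inj) [RHS]esum_mkcond.
apply: eq_esum => j _; case: ifPn => // /negP j_notin_range.
case psi_j: (psi j) => [t|//] /=; exfalso; apply: j_notin_range.
by rewrite inE; exists t => //; have := psiK j; rewrite psi_j.
Qed.

Lemma esum_nat2 (R : realType) (f : nat -> \bar R) :
  (forall i, 0 <= f i)%E -> (forall i, (2 <= i)%N -> f i = 0%E) ->
  \esum_(i in [set: nat]) f i = (f 0%N + f 1%N)%E.
Proof.
move=> f0 f2; rewrite -nneseries_esumT// (nneseries_split 0 2)//.
rewrite eseries0 ?adde0; last by move=> i i2 _; exact: f2.
by rewrite add0n !big_nat_recr//= big_geq// add0e.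
Qed.

Lemma conj_exp_gt0 (R : realType) (p : R) : 1 < p -> 0 < conj_exp p.
Proof. by move=> p1; rewrite divr_gt0 ?subr_gt0// (lt_trans _ p1). Qed.

Lemma expRN_le_powR (R : realType) (a e : R) :
  0 <= a -> 0 < e -> expR (- a) <= e `^ (- a / (1 + e)).
Proof.
move=> a0 e0; rewrite /powR gt_eqF// ler_expR !mulNr lerN2.
have ln_le : ln e <= 1 + e by have := expR_ge1Dx (ln e); rewrite lnK ?posrE//; lra.
apply: le_trans (ler_wpM2l (divr_ge0 a0 _) ln_le) _; first lra.
by rewrite divfK// gt_eqF//; lra.
Qed.

Lemma exists_unit_factor [R : realType] [a : R] [s : \bar R] :
  s \is a fin_num -> 0 <= a -> (a%:E <= s)%E ->
  exists2 l, 0 <= l <= 1 & (l%:E * s)%E = a%:E.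
Proof.
move=> /fineK <- a0; rewrite lee_fin => a_le_s; set s' := fine s in a_le_s *.
have [s0|sn0] := eqVneq s' 0.
  exists 0; rewrite ?lexx ?ler01// mul0e; congr EFin.
  by apply/eqP; rewrite eq_le a0 -s0 a_le_s.
have s_gt0 : 0 < s' by rewrite lt0r sn0 (le_trans a0).
exists (a / s'); last by rewrite -EFinM divfK.
by rewrite divr_ge0 ?(ltW s_gt0)//= ler_pdivrMr// mul1r.
Qed.

Lemma cauchy_real_seq_limit [R : realType] [a : nat -> R] :
  (forall e, 0 < e -> exists n0, forall m n, (n0 <= m)%N -> (n0 <= n)%N ->
     `|a m - a n| < e) ->
  exists l, forall e, 0 < e -> exists n0, forall n, (n0 <= n)%N -> `|a n - l| < e.
Proof.
move=> a_cauchy.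
have : cvg (a @ \oo).
  apply/cauchy_cvgP; apply: cauchy_exP => e e0.
  have [n0 Hn0] := a_cauchy e e0.
  by exists (a n0), n0 => // n /= nn0; rewrite /ball /= Hn0.
move=> /cvgrPdist_lt a_cvg; exists (lim (a @ \oo)) => e e0.
have [n0 _ Hn0] := a_cvg e e0.
by exists n0 => n nn0; rewrite distrC; exact: Hn0.
Qed.

Lemma norm_sub_le_esum_steps (R : realType) (b : nat -> R) (l : R) :
  (forall d, 0 < d -> exists J, `|b J - l| < d) ->
  (`|b 0%N - l|%:E <= \esum_(i in [set: nat]) `|b i - b i.+1|%:E)%E.
Proof.
move=> b_clusters; apply/lee_addgt0Pr => d d0; have [J bJ] := b_clusters d d0.
have partial_le : ((\sum_(0 <= i < J) `|b i - b i.+1|)%:E <=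
    \esum_(i in [set: nat]) `|b i - b i.+1|%:E)%E.
  rewrite -nneseries_esumT// -sumEFin.
  by apply: nneseries_lim_ge => i _ _; rewrite lee_fin.
apply: le_trans (leeD2r _ partial_le); rewrite -EFinD lee_fin.
have -> : b 0%N - l = (b 0%N - b J) + (b J - l) by rewrite addrA subrK.
apply: le_trans (ler_normD _ _) (lerD _ (ltW bJ)).
rewrite -opprB -(telescope_sumr _ (leq0n J)) normrN.
by apply: le_trans (ler_norm_sum _ _ _) _; under eq_bigr do rewrite distrC.
Qed.

Section small_leb_column.
Variables (R : realType) (I : choiceType) (theta q : R).
Hypothesis q_ge1 : 1 <= q.

Definition small_leb_exp (e : R) : R := conj_exp (q * (1 + e)).

Definition small_leb_term (v : I -> R) (e : R) : \bar R :=
  ((e `^ (- theta / (q * (1 + e))))%:E *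
     poweR (\esum_(k in [set: I]) (v k `^ small_leb_exp e)%:E) (small_leb_exp e)^-1)%E.

Definition small_leb_col (v : I -> R) : \bar R :=
  ereal_inf [set small_leb_term v e | e in [set e | 0 < e]].

Lemma small_leb_columnE (D : I -> I -> R) j :
  small_leb_column theta q D j = small_leb_col (D ^~ j).
Proof. by []. Qed.

Lemma small_leb_exp_gt0 {e : R} : 0 < e -> 0 < small_leb_exp e.
Proof.
move=> e0; apply: conj_exp_gt0; rewrite (le_lt_trans q_ge1)// -[ltLHS]mulr1.
by rewrite ltr_pM2l ?ltrDl// (lt_le_trans _ q_ge1).
Qed.

Lemma small_leb_term_ge0 v e : (0 <= small_leb_term v e)%E.
Proof. by rewrite mule_ge0// ?lee_fin ?powR_ge0// poweR_ge0. Qed.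

Lemma small_leb_col_ge0 v : (0 <= small_leb_col v)%E.
Proof. by apply/ereal_infP => _ [e _ <-]; exact: small_leb_term_ge0. Qed.

Let esum_pow_ge0 (v : I -> R) p :
  (0 <= \esum_(k in [set: I]) (v k `^ p)%:E)%E.
Proof. by apply: esum_ge0 => k _; rewrite lee_fin powR_ge0. Qed.

Lemma le_small_leb_col (v w : I -> R) :
  (forall k, 0 <= v k <= w k) -> (small_leb_col v <= small_leb_col w)%E.
Proof.
move=> vw; apply/ereal_infP => _ [e e0 <-].
apply: le_trans (ereal_inf_lbound _) _; first by exists e.
rewrite lee_wpmul2l ?lee_fin ?powR_ge0//.
have p_gt0 := small_leb_exp_gt0 e0.
apply: gt0_ler_poweR; rewrite ?in_itv/= ?leey ?esum_pow_ge0 ?invr_ge0 ?(ltW p_gt0)//.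
apply: le_esum => k _; rewrite lee_fin; have /andP[v0 vw_k] := vw k.
by apply: (ge0_ler_powR (ltW p_gt0)); rewrite ?nnegrE ?(le_trans v0).
Qed.

Lemma small_leb_col0 : small_leb_col (fun _ => 0) = 0%E.
Proof.
apply/eqP; rewrite eq_le small_leb_col_ge0 andbT.
apply: ereal_inf_lbound; exists 1 => //=.
have p_gt0 := small_leb_exp_gt0 ltr01.
rewrite /small_leb_term esum1 ?poweR0r ?mule0 ?invr_neq0 ?gt_eqF//.
by move=> k _; rewrite powR0// gt_eqF.
Qed.

Lemma small_leb_colZ (v : I -> R) (l : R) : 0 < l -> (forall k, 0 <= v k) ->
  small_leb_col (fun k => l * v k) = (l%:E * small_leb_col v)%E.
Proof.
move=> l0 v0; rewrite /small_leb_col -ereal_inf_pZl// image_comp.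
congr ereal_inf; apply: eq_imagel => e e0 /=.
have p_gt0 := small_leb_exp_gt0 e0.
rewrite /small_leb_term muleCA; congr (_ * _)%E.
rewrite (eq_esum (b := fun k => ((l `^ small_leb_exp e)%:E * (v k `^ small_leb_exp e)%:E)%E));
  last by move=> k _; rewrite powRM ?(ltW l0).
rewrite esumZl ?powR_ge0// => [|k]; last by rewrite lee_fin powR_ge0.
rewrite poweRM ?lee_fin ?powR_ge0 ?esum_pow_ge0// poweR_EFin -powRrM.
by rewrite mulfV ?gt_eqF// powRr1 ?ltW.
Qed.

Lemma small_leb_col_coord (v : I -> R) k : 0 <= theta -> (forall k, 0 <= v k) ->
  ((expR (- (theta / q)) * v k)%:E <= small_leb_col v)%E.
Proof.
move=> theta0 v0; apply/ereal_infP => _ [e e0 <-].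
have p_gt0 := small_leb_exp_gt0 e0.
rewrite /small_leb_term EFinM; apply: lee_pmul; rewrite ?lee_fin ?expR_ge0 ?v0//.
  have -> : - theta / (q * (1 + e)) = - (theta / q) / (1 + e).
    by rewrite invfM mulrA !mulNr.
  exact: expRN_le_powR (divr_ge0 theta0 (le_trans ler01 q_ge1)) e0.
have -> : (v k)%:E = poweR ((v k `^ small_leb_exp e)%:E) (small_leb_exp e)^-1.
  by rewrite poweR_EFin -powRrM mulfV ?gt_eqF// powRr1.
apply: gt0_ler_poweR;
  rewrite ?in_itv/= ?leey ?esum_pow_ge0 ?lee_fin ?powR_ge0 ?invr_ge0 ?(ltW p_gt0)//.
apply: esum_ge; exists [set k]; first by split => //; exact: finite_set1.
by rewrite fsbig_set1.
Qed.

End small_leb_column.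

Section small_leb_norm.
Variables (R : realType) (I : choiceType) (theta q : R).
Hypotheses (theta_ge0 : 0 <= theta) (q_ge1 : 1 <= q).
Local Notation N := (small_leb_norm (I := I) theta q).
Local Notation col := (small_leb_column (I := I) theta q).

Lemma small_leb_norm_ge0 (y : I -> R) : (0 <= N y)%E.
Proof.
apply/ereal_infP => _ [D _ <-]; apply: esum_ge0 => j _.
exact: small_leb_col_ge0.
Qed.

Lemma small_leb_norm_fin_num (y : I -> R) : (N y < +oo)%E -> N y \is a fin_num.
Proof. by rewrite ge0_fin_numE// small_leb_norm_ge0. Qed.

Lemma eq_small_leb_norm_abs (y z : I -> R) : (forall k, `|y k| = `|z k|) -> N y = N z.
Proof.
move=> yz; rewrite /small_leb_norm; congr ereal_inf.
apply/seteqP; split => _ [D [D0 HD] <-]; exists D => //; split => // k.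
  by rewrite -yz.
by rewrite yz.
Qed.

Lemma small_leb_norm0 : N (fun _ => 0) = 0%E.
Proof.
apply/eqP; rewrite eq_le small_leb_norm_ge0 andbT.
apply: ereal_inf_lbound; exists (fun _ _ => 0).
  by split => // k; rewrite normr0 esum1.
by apply: esum1 => j _; rewrite small_leb_columnE small_leb_col0.
Qed.

Lemma small_leb_decomp_coord (y : I -> R) D k : small_leb_decomp y D ->
  ((expR (- (theta / q)) * `|y k|)%:E <= \esum_(j in [set: I]) col D j)%E.
Proof.
move=> [D0 HD]; rewrite EFinM HD -esumZl ?expR_ge0// => [|j]; last by rewrite lee_fin.
apply: le_esum => j _; rewrite -EFinM small_leb_columnE.
exact: small_leb_col_coord.
Qed.

Lemma small_leb_norm_coord (y : I -> R) k :
  ((expR (- (theta / q)) * `|y k|)%:E <= N y)%E.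
Proof.
by apply/ereal_infP => _ [D yD <-]; exact: small_leb_decomp_coord.
Qed.

Lemma small_leb_norm_eq0 (y : I -> R) : N y = 0%E -> y = (fun _ => 0).
Proof.
move=> Ny0; apply/funext => k; have := small_leb_norm_coord y k.
by rewrite Ny0 lee_fin pmulr_rle0 ?expR_gt0// normr_le0 => /eqP.
Qed.

Let small_leb_normZ_le (y : I -> R) (l : R) :
  0 < l -> (N (fun k => (l * y k)%R) <= l%:E * N y)%E.
Proof.
move=> l0; rewrite -lee_pdivrMl//; apply/ereal_infP => _ [D [D0 HD] <-].
rewrite lee_pdivrMl//; apply: ereal_inf_lbound; exists (fun k j => l * D k j).
  split => [k j|k]; first exact: mulr_ge0 (ltW l0) (D0 k j).
  rewrite normrM gtr0_norm// EFinM HD -esumZl ?ltW// => j.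
  by rewrite lee_fin.
rewrite -esumZl ?ltW// => [|j]; last exact: small_leb_col_ge0.
by apply: eq_esum => j _; rewrite !small_leb_columnE small_leb_colZ.
Qed.

Let small_leb_normZ_pos (y : I -> R) (l : R) :
  0 < l -> N (fun k => l * y k) = (l%:E * N y)%E.
Proof.
move=> l0; apply/eqP; rewrite eq_le small_leb_normZ_le//=.
have linv_gt0 : 0 < l^-1 by rewrite invr_gt0.
rewrite -lee_pdivlMl//; have := small_leb_normZ_le (fun k => l * y k) _ linv_gt0.
by under eq_fun do rewrite mulKf ?gt_eqF//.
Qed.

Lemma small_leb_normZ (y : I -> R) (c : R) :
  N (fun k => c * y k) = (`|c|%:E * N y)%E.
Proof.
have [->|c_neq0] := eqVneq c 0.
  by under eq_fun do rewrite mul0r; rewrite small_leb_norm0 normr0 mul0e.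
rewrite (@eq_small_leb_norm_abs _ (fun k => `|c| * y k)).
  by rewrite small_leb_normZ_pos ?normr_gt0.
by move=> k; rewrite !normrM normr_id.
Qed.

End small_leb_norm.

Section small_leb_gluing.
Variables (R : realType) (I : choiceType) (theta q : R).
Variables (phi : nat * I -> I) (psi : I -> option (nat * I)).
Hypotheses (phiK : pcancel phi psi) (psiK : ocancel psi phi).
Hypotheses (theta_ge0 : 0 <= theta) (q_ge1 : 1 <= q).
Local Notation N := (small_leb_norm (I := I) theta q).
Local Notation col := (small_leb_column (I := I) theta q).

Lemma small_leb_norm_le_decomps (y : I -> R) (w : nat -> I -> R)
    (Dw : nat -> I -> I -> R) :
  (forall i, small_leb_decomp (w i) (Dw i)) ->
  (forall k, `|y k|%:E <= \esum_(i in [set: nat]) `|w i k|%:E)%E ->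
  (N y <= \esum_(i in [set: nat]) \esum_(j in [set: I]) col (Dw i) j)%E.
Proof.
move=> Dw_decomp y_le.
set T := (X in (_ <= X)%E).
have [->|T_neq_oo] := eqVneq T +oo%E; first by rewrite leey.
pose c := expR (- (theta / q)).
have c_gt0 : 0 < c := expR_gt0 _.
pose S k := \esum_(i in [set: nat]) `|w i k|%:E.
have S_ge0 k : (0 <= S k)%E by apply: esum_ge0 => i _; rewrite lee_fin.
have S_fin k : S k \is a fin_num.
  have cS_le : (c%:E * S k <= T)%E.
    rewrite /S -esumZl ?(ltW c_gt0)//.
    apply: le_esum => i _; rewrite -EFinM.
    exact: small_leb_decomp_coord.
  rewrite ge0_fin_numE// -(@lte_pmul2l _ c%:E) ?lte_fin// mulry gtr0_sg// mul1e.
  by apply: le_lt_trans cS_le _; rewrite ltey.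
have lam_k k : exists l, 0 <= l <= 1 /\ ((l%:E * S k)%E = `|y k|%:E).
  by have [l l01 lE] := exists_unit_factor (S_fin k) (normr_ge0 _) (y_le k); exists l.
have [lam lamP] := choice lam_k.
have lam_ge0 k : 0 <= lam k by case/andP: (lamP k).1.
pose D k j := oapp (fun p => lam k * Dw p.1 k p.2) 0 (psi j).
have Dw_ge0 i k j : 0 <= Dw i k j by case: (Dw_decomp i) => + _; apply.
apply: le_trans (_ : _ <= \esum_(j in [set: I]) col D j)%E _.
  apply: ereal_inf_lbound; exists D => //; split.
    by move=> k j; rewrite /D; case: (psi j) => //= p; rewrite mulr_ge0.
  move=> k; rewrite -(lamP k).2.
  rewrite (eq_esum
    (b := fun j => oapp (fun p => (lam k)%:E * (Dw p.1 k p.2)%:E) 0 (psi j))%E);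
    last by move=> j _; rewrite /D; case: (psi j) => //= p; rewrite EFinM.
  rewrite (esum_oapp_pcancel _ phiK psiK) => [|p]; last by rewrite mule_ge0// lee_fin ?lam_ge0.
  rewrite esumZl ?lam_ge0// => [|p]; last by rewrite lee_fin.
  rewrite esum_pair// => [|p]; last by rewrite lee_fin.
  by congr (_ * _)%E; apply: eq_esum => i _; rewrite (Dw_decomp i).2.
apply: le_trans (_ : _ <= \esum_(j in [set: I]) oapp (fun p => col (Dw p.1) p.2) 0 (psi j))%E _.
  apply: le_esum => j _; rewrite !small_leb_columnE /D.
  case: (psi j) => [p|] /=; last by rewrite small_leb_col0.
  apply: le_small_leb_col => // k.
  by rewrite mulr_ge0 ?lam_ge0//= ler_piMl; case/andP: (lamP k).1.
rewrite (esum_oapp_pcancel _ phiK psiK) ?esum_pair// => p; exact: small_leb_col_ge0.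
Qed.

Lemma small_leb_norm_le_esum (y : I -> R) (w : nat -> I -> R) :
  (forall k, `|y k|%:E <= \esum_(i in [set: nat]) `|w i k|%:E)%E ->
  (N y <= \esum_(i in [set: nat]) N (w i))%E.
Proof.
move=> y_le; set T := (X in (_ <= X)%E).
have [->|T_neq_oo] := eqVneq T +oo%E; first by rewrite leey.
have Nw_lt_oo i : (N (w i) < +oo)%E.
  apply: le_lt_trans (_ : _ <= T)%E _; last by rewrite ltey.
  apply: esum_ge; exists [set i]; first by split => //; exact: finite_set1.
  by rewrite fsbig_set1.
apply/lee_addgt0Pr => d d_gt0.
pose eps i := d / (2 ^ i.+1)%:R.
have eps_gt0 i : 0 < eps i by rewrite divr_gt0// ltr0n expn_gt0.
have near_decomp i : exists D, small_leb_decomp (w i) D /\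
    (\esum_(j in [set: I]) col D j < N (w i) + (eps i)%:E)%E.
  have /ereal_inf_lt[_ [D wD <-] D_lt] : (N (w i) < N (w i) + (eps i)%:E)%E.
    by rewrite lteDl ?lte_fin ?small_leb_norm_fin_num.
  by exists D.
have [Dw Dw_near] := choice near_decomp.
apply: le_trans (small_leb_norm_le_decomps _ _ _ (fun i => (Dw_near i).1) y_le) _.
apply: le_trans (_ : _ <= \esum_(i in [set: nat]) (N (w i) + (eps i)%:E))%E _.
  by apply: le_esum => i _; apply: ltW; exact: (Dw_near i).2.
rewrite /T -!nneseries_esumT.
- by apply: epsilon_trick => [i|]; [exact: small_leb_norm_ge0|exact: ltW].
- by move=> i; exact: small_leb_norm_ge0.
- by move=> i; rewrite adde_ge0 ?small_leb_norm_ge0// lee_fin ltW.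
Qed.

Lemma small_leb_normD (y z : I -> R) :
  (N (fun k => (y k + z k)%R) <= N y + N z)%E.
Proof.
pose w i : I -> R := if i is 0%N then y else if i is 1%N then z else fun=> 0.
have esum_w (f : (I -> R) -> \bar R) : (forall v, 0 <= f v)%E -> f (fun=> 0) = 0%E ->
    \esum_(i in [set: nat]) f (w i) = (f y + f z)%E.
  by move=> f_ge0 f0; rewrite esum_nat2// => -[|[|i]].
rewrite -(esum_w N) ?small_leb_norm0//; last by move=> v; exact: small_leb_norm_ge0.
apply: small_leb_norm_le_esum => k.
rewrite (esum_w (fun v => `|v k|%:E))// ?normr0// -EFinD lee_fin.
exact: ler_normD.
Qed.

Lemma small_leb_norm_sub_limit_le (u : nat -> I -> R) (y : I -> R) :
  (forall e : R, 0 < e -> exists n0, forall m n, (n0 <= m)%N -> (n0 <= n)%N ->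
     (N (fun k => (u m k - u n k)%R) < e%:E)%E) ->
  (forall k e, 0 < e -> exists n0, forall n, (n0 <= n)%N -> `|u n k - y k| < e) ->
  forall e : R, 0 < e -> exists n0, forall n, (n0 <= n)%N ->
     (N (fun k => (u n k - y k)%R) <= e%:E)%E.
Proof.
move=> u_cauchy y_lim e e_gt0.
pose eps i := e / (2 ^ i.+1)%:R.
have eps_gt0 i : 0 < eps i by rewrite divr_gt0// ltr0n expn_gt0.
have [M HM] := choice (fun i => u_cauchy (eps i) (eps_gt0 i)).
exists (M 0%N) => n n_ge.
pose a i := if i is i'.+1 then (i' + M i' + M i)%N else n.
have a_ge i : (M i <= a i)%N /\ (M i <= a i.+1)%N by case: i => [|i] /=; lia.
pose w i k := u (a i) k - u (a i.+1) k.
apply: le_trans (small_leb_norm_le_esum _ w _) _.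
  move=> k; apply: (@norm_sub_le_esum_steps _ (fun i => u (a i) k)) => d d_gt0.
  have [n1 Hn1] := y_lim k d d_gt0; exists n1.+1; apply: Hn1 => /=; lia.
apply: le_trans (_ : _ <= \esum_(i in [set: nat]) (eps i)%:E)%E _.
  by apply: le_esum => i _; apply/ltW/HM; case: (a_ge i).
rewrite -nneseries_esumT => [|i]; last by rewrite lee_fin ltW.
exact: epsilon_trick0 (ltW e_gt0).
Qed.

Lemma small_leb_norm_complete (u : nat -> I -> R) :
  (forall n, (N (u n) < +oo)%E) ->
  (forall e : R, 0 < e -> exists n0, forall m n, (n0 <= m)%N -> (n0 <= n)%N ->
     (N (fun k => (u m k - u n k)%R) < e%:E)%E) ->
  exists y, (N y < +oo)%E /\
    forall e : R, 0 < e -> exists n0, forall n, (n0 <= n)%N ->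
      (N (fun k => (u n k - y k)%R) < e%:E)%E.
Proof.
move=> u_fin u_cauchy.
pose c := expR (- (theta / q)).
have c_gt0 : 0 < c := expR_gt0 _.
have coord_cauchy k e : 0 < e -> exists n0, forall m n, (n0 <= m)%N -> (n0 <= n)%N ->
    `|u m k - u n k| < e.
  move=> e_gt0; have [n0 Hn0] := u_cauchy (c * e) (mulr_gt0 c_gt0 e_gt0).
  exists n0 => m n m_ge n_ge; rewrite -(ltr_pM2l c_gt0) -lte_fin.
  by apply: le_lt_trans (Hn0 m n m_ge n_ge); exact: small_leb_norm_coord.
have [y y_lim] := choice (fun k => cauchy_real_seq_limit (coord_cauchy k)).
have u_near := small_leb_norm_sub_limit_le _ _ u_cauchy y_lim.
exists y; split.
  have [n0 Hn0] := u_near 1 ltr01.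
  have -> : y = (fun k => u n0 k + - (u n0 k - y k)).
    by apply/funext => k; rewrite opprB addrC subrK.
  apply: le_lt_trans (small_leb_normD _ _) _.
  rewrite (@eq_small_leb_norm_abs _ _ _ _ (fun k => - (u n0 k - y k)) (fun k => u n0 k - y k));
    last by move=> k; rewrite normrN.
  by rewrite lte_add_pinfty// (le_lt_trans (Hn0 n0 (leqnn _))) ?ltry.
move=> e e_gt0; have e2_gt0 : 0 < e / 2 by rewrite divr_gt0.
have [n0 Hn0] := u_near _ e2_gt0; exists n0 => n n_ge.
by apply: le_lt_trans (Hn0 n n_ge) _; rewrite lte_fin; lra.
Qed.

Lemma small_leb_banach : banach_seq_space (small_leb_norm (I := I) theta q).
Proof.
rewrite /banach_seq_space /=; split; first by rewrite small_leb_norm0 ?ltry.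
split.
  move=> y z y_fin z_fin.
  exact: le_lt_trans (small_leb_normD _ _) (lte_add_pinfty y_fin z_fin).
split.
  move=> c y y_fin; rewrite small_leb_normZ// ltey_eq fin_numM//.
  exact: small_leb_norm_fin_num.
split; first by move=> y _; exact: small_leb_norm_ge0.
split; first by move=> y _; split => [|->]; [exact: small_leb_norm_eq0|exact: small_leb_norm0].
split; first by move=> c y _; exact: small_leb_normZ.
split; first by move=> y z _ _; exact: small_leb_normD.
exact: small_leb_norm_complete.
Qed.

End small_leb_gluing.

Theorem theorem3p5 (R : realType) (theta q : R) :
  0 < theta -> 1 <= q ->
  banach_seq_space (small_leb_norm (I := nat) theta q) /\
  banach_seq_space (small_leb_norm (I := int) theta q).
Proof.
move=> theta_gt0 q_ge1; have theta_ge0 := ltW theta_gt0; split.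
  exact: small_leb_banach pickleK_inv pickle_invK theta_ge0 q_ge1.
pose phi (p : nat * int) : int := Posz (pickle p).
pose psi (j : int) : option (nat * int) := if j is Posz n then pickle_inv n else None.
have phiK : pcancel phi psi by move=> p; rewrite /psi /phi pickleK_inv.
have psiK : ocancel psi phi.
  case=> [n|n] //=; rewrite /psi /phi; case E: (pickle_inv n) => [p|] //=.
  by have := @pickle_invK (nat * int)%type n; rewrite E /= => ->.
exact: small_leb_banach phiK psiK theta_ge0 q_ge1.
Qed.
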